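(* Let $n\geq 1$ and let $p,q,t,x$ be indeterminates. Define $$A_n(p,q,t)=\sum_{\sigma\in\mathfrak{S}_n}p^{\mathsf{nest}\,\sigma}q^{\mathsf{cros}\,\sigma}t^{\mathsf{exc}\,\sigma}.$$ Then $$A_{n}(p, q, t)=\left(\frac{1+xt}{1+x}\right)^{n-1}P^{(\mathsf{nest}, \mathsf{cros},\mathsf{cpk}^*,\mathsf{exc})}\left(\mathfrak{S}_n; p, q, \frac{(1+x)^{2}t}{(x+t)(1+xt)},\frac{x+t}{1+xt}\right),$$ equivalently, $$P^{(\mathsf{nest}, \mathsf{cros}, \mathsf{cpk}^*,\mathsf{exc})}(\mathfrak{S}_n; p, q, x,t)=\left(\frac{1+u}{1+uv}\right)^{n-1}A_{n}(p, q, v),$$ where $u=\frac{1+t^{2}-2xt-(1-t)\sqrt{(1+t)^{2}-4xt}}{2(1-x)t}$ and $v=\frac{(1+t)^{2}-2xt-(1+t)\sqrt{(1+t)^{2}-4xt}}{2xt}$.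
   Context: $\mathfrak{S}_n$ is the set of permutations of $[n]=\{1,\dots,n\}$. For a finite set $\Omega$ of permutations and statistics $\mathsf{stat}_1,\dots,\mathsf{stat}_m$, $P^{(\mathsf{stat}_1,\ldots,\mathsf{stat}_m)}(\Omega;t_1,\ldots,t_m)=\sum_{\sigma\in\Omega}t_1^{\mathsf{stat}_1\sigma}\cdots t_m^{\mathsf{stat}_m\sigma}$. For $\sigma\in\mathfrak{S}_n$: $\mathsf{exc}\,\sigma=\#\{i:\sigma(i)>i\}$; for $i\in[n]$, $\mathsf{nest}_i\sigma=\#\{j: j<i<\sigma(i)<\sigma(j)\text{ or }\sigma(j)<\sigma(i)\le i<j\}$ and $\mathsf{cros}_i\sigma=\#\{j: j<i<\sigma(j)<\sigma(i)\text{ or }\sigma(i)<\sigma(j)\le i<j\}$; $\mathsf{nest}=\sum_i\mathsf{nest}_i$, $\mathsf{cros}=\sum_i\mathsf{cros}_i$. The star companion $\sigma^*$ is the permutation of $\{0,1,\dots,n\}$ with $\sigma^*(0)=n$ and $\sigma^*(i)=\sigma(i)-1$ for $i\in[n]$. Then $\mathsf{cpk}^*\sigma=\#\{i\in[n-1]:(\sigma^* )^{-1}(i)<i>\sigma^*(i)\}$. *)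

From HB Require Import structures.
From mathcomp Require Import all_boot all_order all_algebra all_fingroup.
Set Implicit Arguments. Unset Strict Implicit. Unset Printing Implicit Defensive.
Import GRing.Theory.

(* Convention: a permutation sigma of [n] = {1..n} is represented by
   s : 'S_n acting on 'I_n = {0..n-1}, via sigma(i) = (s (i-1)) + 1.
   All comparisons below are between positions and values shifted by the
   same amount, so the statistics coincide with the paper's. *)

Section Stats.
Variable n : nat.
Implicit Type s : 'S_n.

Definition exc s : nat := #|[set i : 'I_n | i < s i]|.

Definition nest_i s (i : 'I_n) : nat :=
  #|[set j : 'I_n | ((j < i) && (i < s i) && (s i < s j))
                   || ((s j < s i) && (s i <= i) && (i < j))]|.

Definition cros_i s (i : 'I_n) : nat :=
  #|[set j : 'I_n | ((j < i) && (i < s j) && (s j < s i))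
                   || ((s i < s j) && (s j <= i) && (i < j))]|.

Definition nest s : nat := \sum_(i : 'I_n) nest_i s i.
Definition cros s : nat := \sum_(i : 'I_n) cros_i s i.

Definition sigma1 s (k : nat) : nat :=
  match k with
  | 0 => k
  | m.+1 => match @insub _ (fun m => m < n) _ m with
            | Some i => (val (s i)).+1
            | None => k
            end
  end.

Definition sigma_star s (k : nat) : nat :=
  if k == 0 then n else (sigma1 s k).-1.

(* cpk* sigma = #{i in [n-1] : inv(sigma_star)(i) < i > sigma*(i)} *)
Definition cpk_star s : nat :=
  #|[set i : 'I_n | (0 < val i)
      && [exists k : 'I_n.+1, (sigma_star s k == i) && (val k < i)]
      && (sigma_star s i < i)]|.

End Stats.

Definition A_poly (R : ringType) (n : nat) (p q t : R) : R :=
  \sum_(s : 'S_n) p ^+ nest s * q ^+ cros s * t ^+ exc s.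

Definition P_ncce (R : ringType) (n : nat) (p q y t : R) : R :=
  \sum_(s : 'S_n) p ^+ nest s * q ^+ cros s * y ^+ cpk_star s * t ^+ exc s.

(* Draw sigma as an arc diagram: source i at position 2i+1, target sigma(i) at
   position 2 sigma(i), arc i joining them. Then nest and cros count ordered
   pairs of arcs in nesting or crossing position, exc counts the arcs going
   right, and cpk* counts the sources whose arc goes left and whose right
   neighbour is a target entered from the left.
   Scan the positions from left to right, remembering only which arcs still
   reach the unscanned part. At a source we either open an arc to the right
   (weight t) or close one of the h targets waiting on the left; closing the
   j-th of them nests j arcs and crosses h-1-j, so the choices add up to the
   (p,q)-integer [h]_{p,q}; targets are symmetric. Hence P(S_{n+1}; p, q, y, t)
   is a sum over Motzkin paths with up steps t, level steps (1+t)[h+1]_{p,q} and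
   down steps y[h+1]_{p,q}[h]_{p,q} from height h (Flajolet's J-fraction).
   If y T = c^2 t and 1 + T = c (1 + t), weighting a path at (y, T) by T^height
   multiplies every step weight at (1, t) by c; c = (1+x)/(1+xt) gives the
   theorem. *)

From mathcomp Require Import all_boot all_order all_algebra all_fingroup.
From mathcomp Require Import zify ring.
Set Implicit Arguments. Unset Strict Implicit. Unset Printing Implicit Defensive.
Import GRing.Theory.

(** * Arc diagrams *)

Definition nest_rel (si ei sk ek : nat) : bool :=
  ((sk < si) && (si < ei) && (ei < ek)) || ((ek < ei) && (ei < si) && (si < sk)).

Definition cros_rel (si ei sk ek : nat) : bool :=
  ((sk < si) && (si < ek) && (ek < ei)) || ((ei < ek) && (ek < si) && (si < sk)).

(* On the diagram of sigma (see [src_pos]), the pairs in [cpk_rel 1] are the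
   cyclic peaks of sigma^*: a source whose arc goes left, immediately followed
   by a target entered from the left. *)
Definition cpk_rel (m si ei sk ek : nat) : bool :=
  [&& m <= si, ek == si.+1, ei < si & sk < ek].

Definition reaches (m si ei : nat) : bool :=
  ((si < m) ==> (m <= ei)) && ((ei < m) ==> (m <= si)).

Section ArcDiagram.
Variables (a : nat) (ps pt : nat -> nat) (s : 'S_a).

Definition pair_count (rel : nat -> nat -> nat -> nat -> bool) : nat :=
  \sum_(i : 'I_a) \sum_(k : 'I_a) rel (ps i) (pt (s i)) (ps k) (pt (s k)).

Definition exc_from (m : nat) : nat :=
  \sum_(i : 'I_a) ((m <= ps i) && (ps i < pt (s i))).

Definition entering_count (m : nat) : nat :=
  \sum_(i : 'I_a) ((pt (s i) == m) && (ps i < m)).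

Definition all_reach (m : nat) : bool := [forall i : 'I_a, reaches m (ps i) (pt (s i))].

End ArcDiagram.

Section ScanSums.
Variables (R : comNzRingType) (p q y T : R).
Local Open Scope ring_scope.

Definition arc_weight m a ps pt (s : 'S_a) : R :=
  p ^+ pair_count ps pt s nest_rel * q ^+ pair_count ps pt s cros_rel *
  y ^+ pair_count ps pt s (cpk_rel m) * T ^+ exc_from ps pt s m.

(* [z] marks an arc entering the target at [m] from the left: right after a
   source closed an arc to the left, this completes a cyclic peak. *)
Definition scan_sum (z : R) m a ps pt : R :=
  \sum_(s : 'S_a | all_reach ps pt s m) z ^+ entering_count ps pt s m * arc_weight m ps pt s.

Definition pq_int (h : nat) : R := \sum_(j < h) p ^+ j * q ^+ (h.-1 - j).

Fixpoint motzkin_sum (k g : nat) : R :=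
  if k is k'.+1 then
    T * motzkin_sum k' g.+1 + (1 + T) * pq_int g.+1 * motzkin_sum k' g +
    y * pq_int g.+1 * pq_int g * motzkin_sum k' g.-1
  else (g == 0)%:R.

Lemma scan_sum1E m a ps pt :
  scan_sum 1 m a ps pt = \sum_(s : 'S_a | all_reach ps pt s m) arc_weight m ps pt s.
Proof. by apply: eq_bigr => s _; rewrite expr1n mul1r. Qed.

End ScanSums.

Lemma big_lift_perm (R : nmodType) a (i0 j0 : 'I_a.+1) (P : pred 'S_a.+1)
    (F : 'S_a.+1 -> R) :
  (\sum_(s : 'S_a.+1 | (s i0 == j0) && P s) F s =
   \sum_(s : 'S_a | P (lift_perm i0 j0 s)) F (lift_perm i0 j0 s))%R.
Proof.
rewrite (reindex (lift_perm i0 j0)) /=; last first.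
  pose shrink i (s : 'S_a.+1) k := odflt k (unlift (s i) (s (lift i k))).
  have shrinkK i (s : 'S_a.+1) k: lift (s i) (shrink i s k) = s (lift i k).
    rewrite /shrink; have:= neq_lift i k.
    by rewrite -(can_eq (permK s)) => /unlift_some[] ? ? ->.
  have shrink_inj: injective (shrink i0 _).
    move=> s; apply: can_inj (shrink (s i0) s^-1%g) _ => k'.
    by rewrite {1}/shrink shrinkK !permK liftK.
  exists (fun s => perm (shrink_inj s)) => [s _ | s].
    by apply/permP=> k'; rewrite permE /shrink lift_perm_lift lift_perm_id liftK.
  move/andP=> [/eqP si0 _]; apply/permP=> k.
  case: (unliftP i0 k) => [k'|] ->; rewrite ?lift_perm_id //.
  by rewrite lift_perm_lift -si0 permE shrinkK.
by apply: eq_bigl => s; rewrite lift_perm_id eqxx.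
Qed.

Lemma forall_lift a (i0 : 'I_a.+1) (P : pred 'I_a.+1) :
  [forall i, P i] = P i0 && [forall i' : 'I_a, P (lift i0 i')].
Proof.
apply/forallP/andP => [h | [h1 /forallP h2] i]; first by split => //; apply/forallP.
by case: (unliftP i0 i) => [j|] ->.
Qed.

Lemma sum_arcs_lift_perm a (ps pt : nat -> nat) (s : 'S_a) (i0 j0 : 'I_a.+1)
    (f : nat -> nat -> nat) :
  (\sum_(i : 'I_a.+1) f (ps i) (pt (lift_perm i0 j0 s i)) =
   f (ps i0) (pt j0) + \sum_(i : 'I_a) f (ps (bump i0 i)) (pt (bump j0 (s i))))%N.
Proof.
rewrite (bigD1_ord i0) //= lift_perm_id; congr addn; apply: eq_bigr => i _.
by rewrite lift_perm_lift.
Qed.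

Lemma pair_count_lift_perm a (ps pt : nat -> nat) (s : 'S_a) (i0 j0 : 'I_a.+1) rel :
  (forall u v, rel u v u v = false) ->
  let t := lift_perm i0 j0 s in
  pair_count ps pt t rel =
  (\sum_(k : 'I_a.+1) rel (ps i0) (pt j0) (ps k) (pt (t k))
   + \sum_(i : 'I_a.+1) rel (ps i) (pt (t i)) (ps i0) (pt j0)
   + pair_count (fun n => ps (bump i0 n)) (fun n => pt (bump j0 n)) s rel)%N.
Proof.
move=> irr t; rewrite /pair_count (bigD1_ord i0) //= [X in (_ + X + _)%N](bigD1_ord i0) //=.
rewrite /t lift_perm_id irr add0n -addnA; congr addn; rewrite -big_split.
apply: eq_bigr => i' _ /=; rewrite (bigD1_ord i0) //= lift_perm_id; congr addn.
by apply: eq_bigr => k' _; rewrite !lift_perm_lift.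
Qed.

Lemma sum_ltn_ord n c : c <= n -> (\sum_(l < n) (l < c) = c)%N.
Proof.
elim: n => [|n IH] hc; first by rewrite big_ord0; case: c hc.
rewrite big_ord_recr /=; case: (ltnP n c) => h; last by rewrite addn0 IH.
have -> : c = n.+1 by lia.
rewrite (eq_bigr (fun _ => 1%N)) => [|l _]; last by rewrite ltnS ltnW.
by rewrite sum_nat_const card_ord muln1 addn1.
Qed.

Lemma sum_ltn_between n c d : c < d -> d <= n ->
  (\sum_(l < n) ((c < l) && (l < d)) = d.-1 - c)%N.
Proof.
move=> cd dn.
have split_l (l : 'I_n) : ((c < l) && (l < d) : nat) = ((l < d) : nat) - ((l < c.+1) : nat).
  by case: (ltnP c l); case: (ltnP l d) => //= *; lia.
rewrite (eq_bigr _ (fun l _ => split_l l)) sumnB => [|l _]; last first.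
  by case: (ltnP l c.+1); case: (ltnP l d) => //= *; lia.
rewrite !sum_ltn_ord //; lia.
Qed.

Lemma card_set_sum n (P : pred 'I_n) : #|[set j | P j]| = (\sum_j (P j : nat))%N.
Proof.
rewrite cardsE -sum1_card big_mkcond /=; apply: eq_bigr => j _.
by rewrite unfold_in; case: (P j).
Qed.

Lemma reaches_succ m u v : u != m -> v != m -> reaches m u v = reaches m.+1 u v.
Proof. by rewrite /reaches => *; apply/idP/idP; lia. Qed.

Lemma cpk_rel_succ m u v u' v' : (u = m -> m < v) -> cpk_rel m u v u' v' = cpk_rel m.+1 u v u' v'.
Proof. by rewrite /cpk_rel => *; apply/idP/idP; lia. Qed.

Lemma exc_step_succ m u v : u != m -> ((m <= u) && (u < v)) = ((m.+1 <= u) && (u < v)).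
Proof. by move=> *; apply/idP/idP; lia. Qed.

(** * Scanning a diagram *)

(* Positions [< m] are scanned and hold the first [vs] sources and [vt]
   targets; the other sources lie at [ms, ms + 2, ...] and the other targets at
   [mt, mt + 2, ...]. The next point is a source if [ms = m], a target if
   [mt = m]. *)
Record scan_state a (ps pt : nat -> nat) m ms mt vs vt ks kt : Prop := ScanState {
  ps_mono : {mono ps : i j / i <= j};
  pt_mono : {mono pt : i j / i <= j};
  ps_pt_neq : forall i j, ps i != pt j;
  sources_split : a = vs + ks;
  targets_split : a = vt + kt;
  ps_scanned : forall i, i < vs -> ps i < m;
  pt_scanned : forall j, j < vt -> pt j < m;
  ps_pending : forall r, r < ks -> ps (vs + r) = ms + 2 * r;
  pt_pending : forall r, r < kt -> pt (vt + r) = mt + 2 * r }.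

Lemma mono_bump (f : nat -> nat) h :
  {mono f : i j / i <= j} -> {mono (fun n => f (bump h n)) : i j / i <= j}.
Proof. by move=> mf i j; rewrite mf leq_bump2. Qed.

Section SourceState.
Variables (a : nat) (ps pt : nat -> nat) (m vs vt ks kt : nat).
Hypothesis st : scan_state a.+1 ps pt m m m.+1 vs vt ks.+1 kt.

Lemma src_ps_vs : ps vs = m.
Proof. by have := ps_pending st (ltn0Sn ks); rewrite addn0 muln0 addn0. Qed.

Lemma src_ps_eq i : (ps i == m) = (i == vs).
Proof. by rewrite -src_ps_vs (inj_eq (incn_inj (ps_mono st))). Qed.

Lemma src_pt_neq j : pt j != m.
Proof. by rewrite -src_ps_vs eq_sym (ps_pt_neq st). Qed.

Lemma src_pt_ltn j : j < a.+1 -> (pt j < m) = (j < vt).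
Proof.
move=> ja; apply/idP/idP; last exact: (pt_scanned st).
case: (ltnP j vt) => // jv.
have := pt_pending st (_ : j - vt < kt); rewrite subnKC // => ->; first lia.
by have := targets_split st; lia.
Qed.

Lemma src_open : scan_state a.+1 ps pt m.+1 m.+2 m.+1 vs.+1 vt ks kt.
Proof.
case: st => h1 h2 h3 h4 h5 h6 h7 h8 h9; split => //.
- by rewrite h4 addSnnS.
- move=> i; rewrite ltnS leq_eqVlt => /orP[/eqP ->|/h6]; last by lia.
  by have := h8 0 (ltn0Sn _); rewrite addn0 muln0 addn0 => ->.
- by move=> j /h7; lia.
- by move=> r hr; rewrite addSnnS h8 //; lia.
Qed.

Lemma src_close j : j < vt ->
  scan_state a (fun n => ps (bump vs n)) (fun n => pt (bump j n))
    m.+1 m.+2 m.+1 vs vt.-1 ks kt.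
Proof.
case: st => h1 h2 h3 h4 h5 h6 h7 h8 h9 hj; split.
- exact: mono_bump.
- exact: mono_bump.
- by move=> ? ?; apply: h3.
- by lia.
- by lia.
- move=> i hi; have -> : bump vs i = i by rewrite /bump; case: leqP => // *; lia.
  by have := h6 i hi; lia.
- move=> i hi; have : bump j i < vt by rewrite /bump; case: (j <= i); lia.
  by move/h7; lia.
- by move=> r hr; rewrite /bump leq_addr add1n -addnS h8 //; lia.
- move=> r hr; rewrite /bump (_ : j <= vt.-1 + r); last by lia.
  by rewrite add1n (_ : (vt.-1 + r).+1 = vt + r) ?h9 //; lia.
Qed.

End SourceState.

Section TargetState.
Variables (a : nat) (ps pt : nat -> nat) (m vs vt ks kt : nat).
Hypothesis st : scan_state a.+1 ps pt m m.+1 m vs vt ks kt.+1.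

Lemma tgt_pt_vt : pt vt = m.
Proof. by have := pt_pending st (ltn0Sn kt); rewrite addn0 muln0 addn0. Qed.

Lemma tgt_pt_eq j : (pt j == m) = (j == vt).
Proof. by rewrite -tgt_pt_vt (inj_eq (incn_inj (pt_mono st))). Qed.

Lemma tgt_ps_neq i : ps i != m.
Proof. by rewrite -tgt_pt_vt (ps_pt_neq st). Qed.

Lemma tgt_ps_ltn i : i < a.+1 -> (ps i < m) = (i < vs).
Proof.
move=> ia; apply/idP/idP; last exact: (ps_scanned st).
case: (ltnP i vs) => // iv.
have := ps_pending st (_ : i - vs < ks); rewrite subnKC // => ->; first lia.
by have := sources_split st; lia.
Qed.

Lemma tgt_open : scan_state a.+1 ps pt m.+1 m.+1 m.+2 vs vt.+1 ks kt.
Proof.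
case: st => h1 h2 h3 h4 h5 h6 h7 h8 h9; split => //.
- by rewrite h5 addSnnS.
- by move=> i /h6; lia.
- move=> i; rewrite ltnS leq_eqVlt => /orP[/eqP ->|/h7]; last by lia.
  by have := h9 0 (ltn0Sn _); rewrite addn0 muln0 addn0 => ->.
- by move=> r hr; rewrite addSnnS h9 //; lia.
Qed.

Lemma tgt_close i : i < vs ->
  scan_state a (fun n => ps (bump i n)) (fun n => pt (bump vt n))
    m.+1 m.+1 m.+2 vs.-1 vt ks kt.
Proof.
case: st => h1 h2 h3 h4 h5 h6 h7 h8 h9 hi; split.
- exact: mono_bump.
- exact: mono_bump.
- by move=> ? ?; apply: h3.
- by lia.
- by lia.
- move=> j hj; have : bump i j < vs by rewrite /bump; case: (i <= j); lia.
  by move/h6; lia.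
- move=> j hj; have -> : bump vt j = j by rewrite /bump; case: leqP => // *; lia.
  by have := h7 j hj; lia.
- move=> r hr; rewrite /bump (_ : i <= vs.-1 + r); last by lia.
  by rewrite add1n (_ : (vs.-1 + r).+1 = vs + r) ?h8 //; lia.
- by move=> r hr; rewrite /bump leq_addr add1n -addnS h9 //; lia.
Qed.

End TargetState.

Section SourceStep.
Variables (R : comNzRingType) (p q y T : R).
Variables (a : nat) (ps pt : nat -> nat) (m vs vt ks kt : nat).
Hypothesis st : scan_state a.+1 ps pt m m m.+1 vs vt ks.+1 kt.

Fact src_vs_lt : vs < a.+1.
Proof. by have := sources_split st; lia. Qed.

Let i0 := Ordinal src_vs_lt.

Section Close.
Variables (j : 'I_a.+1) (s' : 'S_a).
Hypothesis j_lt : j < vt.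
Let s := lift_perm i0 j s'.
Let ps' n := ps (bump vs n).
Let pt' n := pt (bump j n).

Fact src_pt_j : pt j < m.
Proof. by rewrite (src_pt_ltn st) ?ltn_ord. Qed.

Lemma src_close_reach : all_reach ps pt s m = all_reach ps' pt' s' m.+1.
Proof.
rewrite /all_reach (forall_lift i0) /s lift_perm_id /= (src_ps_vs st).
have -> : reaches m m (pt j) by rewrite /reaches ltnn src_pt_j leqnn.
apply/eq_forallb => i'; rewrite lift_perm_lift; apply: reaches_succ.
  by rewrite (src_ps_eq st); apply/eqP => e; move: (neq_bump vs i'); rewrite e eqxx.
exact: (src_pt_neq st).
Qed.

Hypothesis reach : all_reach ps pt s m.

Fact src_close_arc (k : 'I_a.+1) : reaches m (ps k) (pt (s k)).
Proof. by move/forallP: reach. Qed.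

Fact src_close_at_m (k : 'I_a.+1) : ps k = m -> pt (s k) = pt j.
Proof.
move=> /eqP; rewrite (src_ps_eq st) => /eqP kE.
have -> : k = i0 by apply: val_inj.
by rewrite /s lift_perm_id.
Qed.

Lemma src_close_nest : pair_count ps pt s nest_rel = (j + pair_count ps' pt' s' nest_rel)%N.
Proof.
rewrite pair_count_lift_perm /= ?(src_ps_vs st); last by move=> *; rewrite /nest_rel; lia.
have -> : (\sum_(i < a.+1) nest_rel (ps i) (pt (s i)) m (pt j) = 0)%N.
  apply: big1 => i _; apply/eqP; rewrite eqb0; have := src_close_arc i.
  rewrite /nest_rel /reaches; have := src_pt_j.
  move: (pt (s i)) (ps i) (pt j) => *; apply/negP; lia.
rewrite addn0; congr addn.
rewrite (eq_bigr (fun k => (s k < j) : nat)) => [|k _].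
  rewrite -[RHS](sum_ltn_ord (ltnW (ltn_ord j))) [RHS](reindex_perm s).
  by apply: eq_bigl.
rewrite -(leqW_mono (pt_mono st)); have := src_close_arc k; have := @src_close_at_m k.
rewrite /nest_rel /reaches; have := src_pt_j.
move: (pt (s k)) (ps k) (pt j) => e u e0 h1 h2 h3.
congr (nat_of_bool _); apply/idP/idP; lia.
Qed.

Lemma src_close_cros :
  pair_count ps pt s cros_rel = (vt.-1 - j + pair_count ps' pt' s' cros_rel)%N.
Proof.
have vt_le : vt <= a.+1 by have := targets_split st; lia.
rewrite pair_count_lift_perm /= ?(src_ps_vs st); last by move=> *; rewrite /cros_rel; lia.
have -> : (\sum_(i < a.+1) cros_rel (ps i) (pt (s i)) m (pt j) = 0)%N.
  apply: big1 => i _; apply/eqP; rewrite eqb0; have := src_close_arc i.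
  rewrite /cros_rel /reaches; have := src_pt_j.
  move: (pt (s i)) (ps i) (pt j) => *; apply/negP; lia.
rewrite addn0; congr addn.
rewrite (eq_bigr (fun k => ((j < s k) && (s k < vt)) : nat)) => [|k _].
  rewrite -[RHS](sum_ltn_between (n := a.+1) j_lt vt_le) [RHS](reindex_perm s).
  by apply: eq_bigl.
rewrite -(leqW_mono (pt_mono st)) -(src_pt_ltn st) ?ltn_ord //.
have := src_close_arc k; have := @src_close_at_m k.
rewrite /cros_rel /reaches; have := src_pt_j.
move: (pt (s k)) (ps k) (pt j) => e u e0 h1 h2 h3.
congr (nat_of_bool _); apply/idP/idP; lia.
Qed.

Lemma src_close_cpk : pair_count ps pt s (cpk_rel m) =
  (entering_count ps' pt' s' m.+1 + pair_count ps' pt' s' (cpk_rel m.+1))%N.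
Proof.
rewrite pair_count_lift_perm /= ?(src_ps_vs st); last by move=> *; rewrite /cpk_rel; lia.
have -> : (\sum_(i < a.+1) cpk_rel m (ps i) (pt (s i)) m (pt j) = 0)%N.
  apply: big1 => i _; apply/eqP; rewrite eqb0 /cpk_rel; have := src_pt_j.
  move: (pt (s i)) (ps i) (pt j) => *; apply/negP; lia.
rewrite addn0; congr addn.
  rewrite (eq_bigr (fun k => ((pt (s k) == m.+1) && (ps k < m.+1)) : nat)) => [|k _].
    rewrite /s (sum_arcs_lift_perm ps pt s' i0 j (fun u v => ((v == m.+1) && (u < m.+1)) : nat)).
    by have := src_pt_j; case: eqP => [->|]; first lia.
  rewrite /cpk_rel; have := src_pt_j.
  move: (pt (s k)) (ps k) (pt j) => *; congr (nat_of_bool _); apply/idP/idP; lia.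
apply: eq_bigr => i _; apply: eq_bigr => k _; congr (nat_of_bool _).
apply: cpk_rel_succ => /eqP.
by rewrite (src_ps_eq st) => /eqP e; move: (neq_bump vs i); rewrite e eqxx.
Qed.

Lemma src_close_exc : exc_from ps pt s m = exc_from ps' pt' s' m.+1.
Proof.
rewrite /exc_from /s (sum_arcs_lift_perm ps pt s' i0 j (fun u v => ((m <= u) && (u < v)) : nat)).
rewrite /= (src_ps_vs st) [m < pt j]ltnNge (ltnW src_pt_j) andbF add0n.
apply: eq_bigr => i _; rewrite exc_step_succ // (src_ps_eq st).
by apply/eqP => e; move: (neq_bump vs i); rewrite e eqxx.
Qed.

End Close.
Lemma src_close_sum (j : 'I_a.+1) : j < vt ->
  (\sum_(s' : 'S_a | all_reach ps pt (lift_perm i0 j s') m)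
      arc_weight p q y T m ps pt (lift_perm i0 j s') =
   p ^+ j * q ^+ (vt.-1 - j) *
   scan_sum p q y T y m.+1 a (fun n => ps (bump vs n)) (fun n => pt (bump j n)))%R.
Proof.
move=> j_lt; rewrite /scan_sum mulr_sumr; apply: eq_big => [s'|s' reach].
  exact: src_close_reach.
rewrite /arc_weight src_close_nest // src_close_cros // src_close_cpk //.
rewrite src_close_exc // !exprD; ring.
Qed.

Lemma src_open_reach (s : 'S_a.+1) :
  all_reach ps pt s m && (m < pt (s i0)) = all_reach ps pt s m.+1.
Proof.
have ps_i0 : ps i0 = m by apply: src_ps_vs st.
apply/andP/forallP => [[/forallP reach out] i | reach].
  have := reach i; have := src_pt_neq st (s i).
  case: (i =P i0) => [-> _|ne]; first by rewrite ps_i0 /reaches; lia.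
  have : ps i != m by rewrite (src_ps_eq st); apply/eqP => iE; apply/ne/val_inj.
  by move: (ps i) (pt (s i)) => u v; rewrite /reaches; lia.
split; last by have := reach i0; rewrite ps_i0 /reaches; lia.
apply/forallP => i; have := reach i; have := src_pt_neq st (s i).
by move: (ps i) (pt (s i)) => u v; rewrite /reaches; lia.
Qed.

Lemma src_open_weight (s : 'S_a.+1) : m < pt (s i0) ->
  arc_weight p q y T m ps pt s = (T * arc_weight p q y T m.+1 ps pt s)%R.
Proof.
move=> out; have ps_i0 : ps i0 = m by apply: src_ps_vs st.
have ps_neq (i : 'I_a.+1) : i != i0 -> ps i != m.
  by rewrite (src_ps_eq st); apply: contra => /eqP iE; apply/eqP/val_inj.
rewrite /arc_weight.
have -> : pair_count ps pt s (cpk_rel m) = pair_count ps pt s (cpk_rel m.+1).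
  apply: eq_bigr => i _; apply: eq_bigr => k _; congr (nat_of_bool _).
  apply: cpk_rel_succ; case: (i =P i0) => [-> //|/eqP /ps_neq].
  by move=> /[swap] ->; rewrite eqxx.
have -> : exc_from ps pt s m = (exc_from ps pt s m.+1).+1.
  rewrite /exc_from (bigD1 i0) //= [in RHS](bigD1 i0) //= ps_i0 leqnn out ltnn /=.
  by rewrite add1n; congr _.+1; apply: eq_bigr => i /ps_neq ne; rewrite exc_step_succ.
rewrite exprS; ring.
Qed.

Lemma src_step :
  scan_sum p q y T 1 m a.+1 ps pt = (T * scan_sum p q y T 1 m.+1 a.+1 ps pt +
   \sum_(j < vt) p ^+ j * q ^+ (vt.-1 - j) *
     scan_sum p q y T y m.+1 a (fun n => ps (bump vs n)) (fun n => pt (bump j n)))%R.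
Proof.
have vt_le : vt <= a.+1 by have := targets_split st; lia.
rewrite !scan_sum1E (bigID (fun s : 'S_a.+1 => m < pt (s i0))) /=; congr (_ + _)%R.
  rewrite mulr_sumr; apply: eq_big => [s | s /andP[_ out]]; first exact: src_open_reach.
  exact: src_open_weight.
rewrite (partition_big (fun s : 'S_a.+1 => s i0) (fun j : 'I_a.+1 => j < vt)) /=; last first.
  move=> s /andP[_]; rewrite -leqNgt -(src_pt_ltn st) ?ltn_ord // ltn_neqAle.
  by move=> ->; rewrite andbT (src_pt_neq st).
pose F j := (p ^+ j * q ^+ (vt.-1 - j) *
  scan_sum p q y T y m.+1 a (fun n => ps (bump vs n)) (fun n => pt (bump j n)))%R.
rewrite [RHS](big_ord_widen _ F vt_le); apply: eq_bigr => j j_lt.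
rewrite (eq_bigl (fun s : 'S_a.+1 => (s i0 == j) && all_reach ps pt s m)) => [|s].
  by rewrite big_lift_perm src_close_sum.
case: eqP => [->|]; rewrite ?andbF ?andbT //= -leqNgt.
have pt_j : pt j < m by rewrite (src_pt_ltn st) ?ltn_ord.
by rewrite (ltnW pt_j) andbT.
Qed.

End SourceStep.

Section TargetStep.
Variables (R : comNzRingType) (p q y T : R).
Variables (a : nat) (ps pt : nat -> nat) (m vs vt ks kt : nat).
Hypothesis st : scan_state a.+1 ps pt m m.+1 m vs vt ks kt.+1.

Fact tgt_vt_lt : vt < a.+1.
Proof. by have := targets_split st; lia. Qed.

Let j0 := Ordinal tgt_vt_lt.

Section Close.
Variables (i : 'I_a.+1) (s' : 'S_a).
Hypothesis i_lt : i < vs.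
Let s := lift_perm i j0 s'.
Let ps' n := ps (bump i n).
Let pt' n := pt (bump vt n).

Fact tgt_ps_i : ps i < m.
Proof. by rewrite (tgt_ps_ltn st) ?ltn_ord. Qed.

Lemma tgt_close_reach : all_reach ps pt s m = all_reach ps' pt' s' m.+1.
Proof.
rewrite /all_reach (forall_lift i) /s lift_perm_id /= (tgt_pt_vt st).
have -> : reaches m (ps i) m by rewrite /reaches ltnn leqnn implybT.
apply/eq_forallb => i'; rewrite lift_perm_lift; apply: reaches_succ.
  exact: (tgt_ps_neq st).
by rewrite (tgt_pt_eq st) eq_sym; exact: (neq_lift j0 (s' i')).
Qed.

Hypothesis reach : all_reach ps pt s m.

Fact tgt_close_arc (k : 'I_a.+1) : reaches m (ps k) (pt (s k)).
Proof. by move/forallP: reach. Qed.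

Fact tgt_close_at_m (k : 'I_a.+1) : pt (s k) = m -> k = i.
Proof.
move=> /eqP; rewrite (tgt_pt_eq st) => /eqP skE.
apply: (@perm_inj _ s); rewrite /s lift_perm_id; exact: val_inj.
Qed.

Lemma tgt_close_entering : entering_count ps pt s m = 1%N.
Proof.
rewrite /entering_count (bigD1 i) //= big1 => [|k /negbTE ki].
  by rewrite /s lift_perm_id /= (tgt_pt_vt st) eqxx tgt_ps_i.
by case: eqP => //= /tgt_close_at_m /eqP; rewrite ki.
Qed.

Lemma tgt_close_nest : pair_count ps pt s nest_rel = (i + pair_count ps' pt' s' nest_rel)%N.
Proof.
rewrite pair_count_lift_perm /= ?(tgt_pt_vt st); last by move=> *; rewrite /nest_rel; lia.
have -> : (\sum_(k < a.+1) nest_rel (ps k) (pt (s k)) (ps i) m = 0)%N.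
  apply: big1 => k _; apply/eqP; rewrite eqb0; have := tgt_close_arc k.
  rewrite /nest_rel /reaches; have := tgt_ps_i.
  move: (pt (s k)) (ps k) (ps i) => *; apply/negP; lia.
rewrite addn0; congr addn.
rewrite (eq_bigr (fun k : 'I_a.+1 => (k < i) : nat)) => [|k _]; first exact: sum_ltn_ord (ltnW _).
have at_m : pt (s k) = m -> ps k = ps i by move/tgt_close_at_m ->.
rewrite -(leqW_mono (ps_mono st)); have := tgt_close_arc k.
rewrite /nest_rel /reaches; have := tgt_ps_i.
move: at_m; move: (pt (s k)) (ps k) (ps i) => e u x h1 h2 h3.
congr (nat_of_bool _); apply/idP/idP; lia.
Qed.

Lemma tgt_close_cros :
  pair_count ps pt s cros_rel = (vs.-1 - i + pair_count ps' pt' s' cros_rel)%N.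
Proof.
have vs_le : vs <= a.+1 by have := sources_split st; lia.
rewrite pair_count_lift_perm /= ?(tgt_pt_vt st); last by move=> *; rewrite /cros_rel; lia.
have -> : (\sum_(k < a.+1) cros_rel (ps i) m (ps k) (pt (s k)) = 0)%N.
  apply: big1 => k _; apply/eqP; rewrite eqb0; have := tgt_close_arc k.
  rewrite /cros_rel /reaches; have := tgt_ps_i.
  move: (pt (s k)) (ps k) (ps i) => *; apply/negP; lia.
rewrite add0n; congr addn.
rewrite (eq_bigr (fun k : 'I_a.+1 => ((i < k) && (k < vs)) : nat)) => [|k _].
  exact: sum_ltn_between.
have at_m : pt (s k) = m -> ps k = ps i by move/tgt_close_at_m ->.
rewrite -(leqW_mono (ps_mono st)) -(tgt_ps_ltn st) ?ltn_ord //.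
have := tgt_close_arc k; rewrite /cros_rel /reaches; have := tgt_ps_i.
move: at_m; move: (pt (s k)) (ps k) (ps i) => e u x h1 h2 h3.
congr (nat_of_bool _); apply/idP/idP; lia.
Qed.

Lemma tgt_close_cpk :
  pair_count ps pt s (cpk_rel m) = pair_count ps' pt' s' (cpk_rel m.+1).
Proof.
rewrite pair_count_lift_perm /= ?(tgt_pt_vt st); last by move=> *; rewrite /cpk_rel; lia.
rewrite !big1 ?add0n => [|k _|k _]; last 2 first.
- by apply/eqP; rewrite eqb0 /cpk_rel; apply/negP; lia.
- by apply/eqP; rewrite eqb0 /cpk_rel; apply/negP; have := tgt_ps_i; lia.
apply: eq_bigr => k _; apply: eq_bigr => l _; congr (nat_of_bool _).
by apply: cpk_rel_succ => /eqP; rewrite (negbTE (tgt_ps_neq st _)).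
Qed.

Lemma tgt_close_exc : exc_from ps pt s m = exc_from ps' pt' s' m.+1.
Proof.
rewrite /exc_from /s (sum_arcs_lift_perm ps pt s' i j0 (fun u v => ((m <= u) && (u < v)) : nat)).
rewrite /= [m <= ps i]leqNgt tgt_ps_i add0n.
by apply: eq_bigr => k _; rewrite exc_step_succ // (tgt_ps_neq st).
Qed.

End Close.

Lemma tgt_close_sum z (i : 'I_a.+1) : i < vs ->
  (\sum_(s' : 'S_a | all_reach ps pt (lift_perm i j0 s') m)
      z ^+ entering_count ps pt (lift_perm i j0 s') m *
      arc_weight p q y T m ps pt (lift_perm i j0 s') =
   z * (p ^+ i * q ^+ (vs.-1 - i) *
   scan_sum p q y T 1 m.+1 a (fun n => ps (bump i n)) (fun n => pt (bump vt n))))%R.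
Proof.
move=> i_lt; rewrite scan_sum1E !mulr_sumr; apply: eq_big => [s'|s' reach].
  exact: tgt_close_reach.
rewrite tgt_close_entering // /arc_weight tgt_close_nest // tgt_close_cros //.
rewrite tgt_close_cpk // tgt_close_exc // !exprD; ring.
Qed.

Lemma tgt_open_reach (s : 'S_a.+1) :
  all_reach ps pt s m && (m < ps (s^-1 j0)%g) = all_reach ps pt s m.+1.
Proof.
have at_m (k : 'I_a.+1) : pt (s k) = m -> k = (s^-1 j0)%g.
  move/eqP; rewrite (tgt_pt_eq st) => /eqP skE.
  by apply: (@perm_inj _ s); rewrite permKV; apply: val_inj.
apply/andP/forallP => [[/forallP reach out] k | reach].
  have := reach k; have := tgt_ps_neq st k.
  case: (pt (s k) =P m) => [e|/eqP ne]; last by move=> ?; rewrite -reaches_succ.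
  by rewrite e {1 3}(at_m k e) /reaches; move: out; move: (ps _) => u; lia.
split; last by have := reach (s^-1 j0)%g; rewrite permKV (tgt_pt_vt st) /reaches; lia.
apply/forallP => k; have := reach k.
by move: (ps k) (pt (s k)) => u v; rewrite /reaches; lia.
Qed.

Lemma tgt_open_weight z (s : 'S_a.+1) : m < ps (s^-1 j0)%g ->
  (z ^+ entering_count ps pt s m * arc_weight p q y T m ps pt s =
   arc_weight p q y T m.+1 ps pt s)%R.
Proof.
move=> out; have -> : entering_count ps pt s m = 0%N.
  apply: big1 => k _; case: eqP => //= /eqP; rewrite (tgt_pt_eq st) => /eqP skE.
  have -> : k = (s^-1 j0)%g by apply: (@perm_inj _ s); rewrite permKV; apply: val_inj.
  by rewrite ltnNge (ltnW out).
have cpkE : pair_count ps pt s (cpk_rel m) = pair_count ps pt s (cpk_rel m.+1).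
  apply: eq_bigr => k _; apply: eq_bigr => l _; congr (nat_of_bool _).
  by apply: cpk_rel_succ => /eqP; rewrite (negbTE (tgt_ps_neq st _)).
have excE : exc_from ps pt s m = exc_from ps pt s m.+1.
  by apply: eq_bigr => k _; rewrite exc_step_succ // (tgt_ps_neq st).
by rewrite expr0 mul1r /arc_weight cpkE excE.
Qed.

Lemma tgt_step z :
  scan_sum p q y T z m a.+1 ps pt = (scan_sum p q y T 1 m.+1 a.+1 ps pt +
   z * \sum_(i < vs) p ^+ i * q ^+ (vs.-1 - i) *
     scan_sum p q y T 1 m.+1 a (fun n => ps (bump i n)) (fun n => pt (bump vt n)))%R.
Proof.
have vs_le : vs <= a.+1 by have := sources_split st; lia.
rewrite scan_sum1E /scan_sum (bigID (fun s : 'S_a.+1 => m < ps (s^-1 j0)%g)) /=.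
congr (_ + _)%R.
  by apply: eq_big => [s | s /andP[_ out]]; [exact: tgt_open_reach | exact: tgt_open_weight].
rewrite (partition_big (fun s : 'S_a.+1 => (s^-1 j0)%g) (fun i : 'I_a.+1 => i < vs)) /=.
  pose F i := (p ^+ i * q ^+ (vs.-1 - i) *
    scan_sum p q y T 1 m.+1 a (fun n => ps (bump i n)) (fun n => pt (bump vt n)))%R.
  rewrite [in RHS](big_ord_widen _ F vs_le) mulr_sumr; apply: eq_bigr => i i_lt.
  rewrite (eq_bigl (fun s : 'S_a.+1 => (s i == j0) && all_reach ps pt s m)) => [|s].
    by rewrite big_lift_perm tgt_close_sum.
  rewrite -(inj_eq (@perm_inj _ s)) permKV eq_sym; case: eqP => [siE|]; last by rewrite andbF.
  have ps_i : ps i < m by rewrite (tgt_ps_ltn st) ?ltn_ord.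
  by rewrite -siE permK -leqNgt (ltnW ps_i) !andbT.
move=> s /andP[_]; rewrite -leqNgt -(tgt_ps_ltn st) ?ltn_ord // ltn_neqAle.
by move=> ->; rewrite andbT (tgt_ps_neq st).
Qed.

End TargetStep.

(** * The Motzkin path expansion *)

Section ScanRecursion.
Variables (R : comNzRingType) (p q y T : R).
Local Open Scope ring_scope.

Lemma scan_sum_done z a ps pt m ms mt vs vt :
  scan_state a ps pt m ms mt vs vt 0 0 -> scan_sum p q y T z m a ps pt = (a == 0)%:R.
Proof.
case: a => [|a] st.
  rewrite /scan_sum (big_pred1 1%g) => [|s]; last first.
    by apply/forallP/eqP => [_|_ []//]; apply/permP => -[].
  by rewrite /entering_count /arc_weight /pair_count /exc_from !big_ord0 !expr0 !mulr1.
rewrite /scan_sum big_pred0 // => s; apply/negbTE/negP => /forallP /(_ ord0).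
have vs_gt0 : (0 < vs)%N by have := sources_split st; lia.
have s0_lt : (s ord0 < vt)%N by have := targets_split st; have := ltn_ord (s ord0); lia.
have := ps_scanned st vs_gt0; have := pt_scanned st s0_lt; rewrite /reaches.
by move: (ps _) (pt _) => u v; lia.
Qed.

Lemma scan_sum_motzkin0 a ps pt m g :
  scan_state a ps pt m m m.+1 g g.+1 1 0 -> scan_sum p q y T 1 m a ps pt = (g == 0)%:R.
Proof.
case: a => [|a] st; first by have := sources_split st; lia.
have ag : a = g by have := sources_split st; lia.
rewrite (src_step p q y T st) (scan_sum_done _ (src_open st)) /= mulr0 add0r.
rewrite (eq_bigr (fun j : 'I_g.+1 => p ^+ j * q ^+ (g - j) * (g == 0)%:R)) => [|j _].
  case: g {st} ag => [|g] _; first by rewrite big_ord1 /= expr0 !mul1r.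
  by rewrite big1 // => j _; rewrite mulr0.
by rewrite (scan_sum_done _ (src_close st (ltn_ord j))) ag.
Qed.

(* [vt = g.+1] is kept as an equation so that the induction hypothesis applies
   to the states produced by [tgt_close], where [vt] is [g.-1.+1]. *)
Lemma scan_sum_motzkin k : forall a ps pt m g vt, vt = g.+1 ->
  scan_state a ps pt m m m.+1 g vt k.+1 k ->
  scan_sum p q y T 1 m a ps pt = motzkin_sum p q y T k g.
Proof.
elim: k => [|k IH] a ps pt m g _ -> st; first exact: scan_sum_motzkin0.
case: a st => [|a] st; first by have := sources_split st; lia.
have [a' aE] : exists a', a = a'.+1 by exists (g + k); have := sources_split st; lia.
subst a; have st' := tgt_open (src_open st).
rewrite (src_step p q y T st) (tgt_step p q y T (src_open st)) mul1r (IH _ _ _ _ _ _ erefl st').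
have opened : \sum_(i < g.+1) p ^+ i * q ^+ (g.+1.-1 - i) *
    scan_sum p q y T 1 m.+2 a'.+1 (fun n => ps (bump i n)) (fun n => pt (bump g.+1 n)) =
    pq_int p q g.+1 * motzkin_sum p q y T k g.
  rewrite /pq_int mulr_suml; apply: eq_bigr => i _.
  by rewrite (IH _ _ _ _ _ _ erefl (tgt_close (src_open st) (ltn_ord i))).
have closed (j : 'I_g.+1) :
    scan_sum p q y T y m.+1 a'.+1 (fun n => ps (bump g n)) (fun n => pt (bump j n)) =
    motzkin_sum p q y T k g + y * pq_int p q g * motzkin_sum p q y T k g.-1.
  have stj := src_close st (ltn_ord j).
  rewrite (tgt_step p q y T stj) (IH _ _ _ _ _ _ erefl (tgt_open stj)) -mulrA; congr (_ + y * _).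
  rewrite /pq_int mulr_suml; apply: eq_bigr => i _.
  by rewrite (IH _ _ _ _ _ _ _ (tgt_close stj (ltn_ord i))) //; have := ltn_ord i; lia.
rewrite opened; under eq_bigr => j _ do rewrite closed.
rewrite -mulr_suml -/(pq_int p q g.+1) /=; ring.
Qed.

End ScanRecursion.

(** * Back to permutations *)

Definition src_pos (i : nat) : nat := (2 * i).+1.
Definition tgt_pos (j : nat) : nat := 2 * j.

Lemma nest_pair_count n (s : 'S_n) : nest s = pair_count src_pos tgt_pos s nest_rel.
Proof.
apply: eq_bigr => i _; rewrite /nest_i card_set_sum; apply: eq_bigr => j _.
rewrite /nest_rel /src_pos /tgt_pos; congr (nat_of_bool _).
by move: (nat_of_ord i) (nat_of_ord j) (nat_of_ord (s i)) (nat_of_ord (s j)) => *; apply/idP/idP; lia.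
Qed.

Lemma cros_pair_count n (s : 'S_n) : cros s = pair_count src_pos tgt_pos s cros_rel.
Proof.
apply: eq_bigr => i _; rewrite /cros_i card_set_sum; apply: eq_bigr => j _.
rewrite /cros_rel /src_pos /tgt_pos; congr (nat_of_bool _).
by move: (nat_of_ord i) (nat_of_ord j) (nat_of_ord (s i)) (nat_of_ord (s j)) => *; apply/idP/idP; lia.
Qed.

Lemma exc_exc_from n (s : 'S_n) : exc s = exc_from src_pos tgt_pos s 1.
Proof.
rewrite /exc card_set_sum; apply: eq_bigr => i _; rewrite /src_pos /tgt_pos.
by congr (nat_of_bool _); move: (nat_of_ord i) (nat_of_ord (s i)) => *; apply/idP/idP; lia.
Qed.

Lemma sigma_star_succ n (s : 'S_n) (i : 'I_n) : sigma_star s i.+1 = s i.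
Proof.
rewrite /sigma_star /= /sigma1; case: insubP => [u _ uE|]; last by rewrite ltn_ord.
by congr (nat_of_ord (s _)); apply: val_inj.
Qed.

Lemma sigma_star_pred_ltn n (s : 'S_n.+1) (i : 'I_n) :
  [exists k : 'I_n.+2, (sigma_star s k == i.+1) && (k < i.+1)] =
  ((s^-1)%g (lift ord0 i) < i).
Proof.
apply/existsP/idP => [[[[|k] k_lt] /= /andP[/eqP skE k_i]] | lt_i].
  by move: skE; rewrite /sigma_star /=; have := ltn_ord i; lia.
have k_lt' : k < n.+1 by [].
move: skE; rewrite (sigma_star_succ s (Ordinal k_lt')) => skE.
suff <- : Ordinal k_lt' = (s^-1)%g (lift ord0 i) by [].
by apply: (@perm_inj _ s); rewrite permKV; apply: val_inj.
exists (lift ord0 ((s^-1)%g (lift ord0 i))).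
by rewrite /= /bump /= add1n sigma_star_succ permKV eqxx ltnS.
Qed.

Lemma cpk_pair_count_row n (s : 'S_n.+1) (i : 'I_n) :
  let i' := widen_ord (leqnSn n) i in
  (\sum_(k < n.+1) cpk_rel 1 (src_pos i') (tgt_pos (s i')) (src_pos k) (tgt_pos (s k)) =
   ((s^-1)%g (lift ord0 i) < i.+1) && (s i' <= i))%N.
Proof.
move=> i'; set k0 := (s^-1)%g (lift ord0 i).
have sk0 : (s k0 : nat) = i.+1 by rewrite permKV.
rewrite (bigD1 k0) //= big1 ?addn0 => [|k k_neq].
  rewrite /cpk_rel /src_pos /tgt_pos sk0; congr (nat_of_bool _).
  by move: (nat_of_ord (s i')) (nat_of_ord k0) (nat_of_ord i) => *; apply/idP/idP; lia.
have : (s k : nat) != i.+1.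
  by rewrite -sk0; apply: contra k_neq => /eqP /val_inj /perm_inj ->.
rewrite /cpk_rel /src_pos /tgt_pos; move: (nat_of_ord (s i')) (nat_of_ord k) (nat_of_ord i) (nat_of_ord (s k)) => *.
by apply/eqP; rewrite eqb0; apply/negP; lia.
Qed.

Lemma cpk_star_pair_count n (s : 'S_n) : cpk_star s = pair_count src_pos tgt_pos s (cpk_rel 1).
Proof.
case: n s => [|n] s; first by rewrite /cpk_star card_set_sum /pair_count !big_ord0.
rewrite /cpk_star card_set_sum /pair_count [LHS]big_ord_recl [RHS]big_ord_recr /=.
rewrite [X in (_ = _ + X)%N]big1 => [|k _]; last first.
  apply/eqP; rewrite eqb0 /cpk_rel /src_pos /tgt_pos; have := ltn_ord (s k).
  by move: (nat_of_ord (s k)) (nat_of_ord (s ord_max)) => *; apply/negP; lia.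
rewrite add0n addn0; apply: eq_bigr => i _; rewrite cpk_pair_count_row /=.
rewrite /bump /= add1n sigma_star_pred_ltn (sigma_star_succ s (widen_ord _ i)) ltnS.
set k0 := (s^-1)%g (lift ord0 i); set i' := widen_ord _ i.
have sk0 : (s k0 : nat) = i.+1 by rewrite permKV.
case: (ltngtP k0 i) => [lt_k0 | gt_k0 | eq_k0].
- by rewrite ltnS (ltnW lt_k0).
- by rewrite ltnS [k0 <= i]leqNgt gt_k0.
have -> : i' = k0 by apply: val_inj.
by rewrite sk0 ltnn !andbF.
Qed.

Lemma P_ncce_scan_sum (R : comNzRingType) n (p q y T : R) :
  P_ncce n p q y T = scan_sum p q y T 1 1 n src_pos tgt_pos.
Proof.
rewrite scan_sum1E; apply: eq_big => [s|s _].
  by apply/esym/forallP => i; rewrite /reaches /src_pos /tgt_pos; lia.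
by rewrite /arc_weight nest_pair_count cros_pair_count cpk_star_pair_count exc_exc_from.
Qed.

Lemma scan_state_init n : scan_state n.+1 src_pos tgt_pos 1 1 2 0 1 n.+1 n.
Proof.
split; rewrite /src_pos /tgt_pos => //.
- by move=> i j; apply/idP/idP; lia.
- by move=> i j; apply/idP/idP; lia.
- by move=> i j; apply/eqP; lia.
all: by move=> *; lia.
Qed.

Lemma P_ncce_motzkin (R : comNzRingType) n (p q y T : R) :
  P_ncce n.+1 p q y T = motzkin_sum p q y T n 0.
Proof. by rewrite P_ncce_scan_sum (scan_sum_motzkin _ _ _ _ erefl (scan_state_init n)). Qed.

Local Open Scope ring_scope.

Lemma A_poly_P_ncce (R : comNzRingType) n (p q t : R) : A_poly n p q t = P_ncce n p q 1 t.
Proof. by apply: eq_bigr => s _; rewrite expr1n mulr1. Qed.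

Lemma motzkin_sum_rescale (R : comNzRingType) (p q y T t c : R) :
  y * T = c ^+ 2 * t -> 1 + T = c * (1 + t) -> forall k g,
  T ^+ g * motzkin_sum p q y T k g = (c * t) ^+ g * c ^+ k * motzkin_sum p q 1 t k g.
Proof.
move=> yTE TE; elim=> [|k IH] g.
  by case: g => [|g]; rewrite /= ?mulr0 ?expr0 ?mul1r ?mulr1.
have down : T ^+ g * (y * pq_int p q g.+1 * pq_int p q g * motzkin_sum p q y T k g.-1) =
    (c * t) ^+ g * c ^+ k.+1 * (1 * pq_int p q g.+1 * pq_int p q g * motzkin_sum p q 1 t k g.-1).
  case: g => [|g]; first by rewrite /pq_int big_ord0 !(mulr0, mul0r).
  have -> : T ^+ g.+1 * (y * pq_int p q g.+2 * pq_int p q g.+1 * motzkin_sum p q y T k g) =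
      y * T * pq_int p q g.+2 * pq_int p q g.+1 * (T ^+ g * motzkin_sum p q y T k g).
    by rewrite exprS; ring.
  by rewrite IH yTE !exprS; ring.
rewrite /= !mulrDr down.
have -> : T ^+ g * (T * motzkin_sum p q y T k g.+1) = T ^+ g.+1 * motzkin_sum p q y T k g.+1.
  by rewrite exprS; ring.
have -> : T ^+ g * ((1 + T) * pq_int p q g.+1 * motzkin_sum p q y T k g) =
    (1 + T) * pq_int p q g.+1 * (T ^+ g * motzkin_sum p q y T k g) by ring.
by rewrite !IH TE !exprS; ring.
Qed.

Theorem theorem3p1 (R : fieldType) (n : nat) (p q t x : R) :
  (0 < n)%N ->
  1 + x != 0 -> x + t != 0 -> 1 + x * t != 0 ->
  A_poly n p q t =
    ((1 + x * t) / (1 + x)) ^+ (n - 1) *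
    P_ncce n p q ((1 + x) ^+ 2 * t / ((x + t) * (1 + x * t)))
                 ((x + t) / (1 + x * t)).
Proof.
case: n => [//|n] _ x1_neq0 xt_neq0 x1t_neq0.
set y := (1 + x) ^+ 2 * t / _; set T := (x + t) / _; set c := (1 + x) / (1 + x * t).
have yTE : y * T = c ^+ 2 * t by rewrite /y /T /c; field; rewrite xt_neq0 x1t_neq0.
have TE : 1 + T = c * (1 + t) by rewrite /T /c; field.
have := motzkin_sum_rescale p q yTE TE n 0; rewrite !expr0 !mul1r => rescaled.
rewrite subn1 A_poly_P_ncce !P_ncce_motzkin rescaled mulrA -exprMn.
have -> : (1 + x * t) / (1 + x) * c = 1 by rewrite /c; field; rewrite x1_neq0 x1t_neq0.
by rewrite expr1n mul1r.
Qed.
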